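(* Let $\xi=e_{12}-e_{14}$ and $U=\{x\in\mathbb R^4:x^2+x^4>0\}$. On $U$ use the coordinates $\tilde x^1=x^2+x^4$, $\tilde x^2=-x^1/(x^2+x^4)$, $\tilde x^3=x^3$, $\tilde x^4=\tfrac12(x^1)^2+x^2(x^2+x^4)$ (a diffeomorphism of $U$ onto $(0,\infty)\times\mathbb R^3$). Then a smooth covector field $A$ on $U$ satisfies $L_\xi A=0$ if and only if there are smooth functions $C_1,C_2,C_3,B$ of $(\tilde x^1,\tilde x^3,\tilde x^4)\in(0,\infty)\times\mathbb R^2$ such that $$A_1=C_2\tilde x^2+C_3,\quad A_2=\tfrac12C_2(\tilde x^2)^2+C_3\tilde x^2+C_1,\quad A_3=B,\quad A_4=A_2+C_2 .$$
   Context: Work in $\mathbb R^4$ with Galilean (Cartesian) coordinates $x^1,x^2,x^3,x^4$ of Minkowski space (metric $\mathrm{diag}(-1,-1,-1,1)$). A potential on an open set $U\subseteq\mathbb R^4$ is a smooth covector field $A=A_i\,dx^i$; its components $A_i$ are always those with respect to the coordinates $x^i$, even when written as functions of other variables. For a vector field $\xi=\xi^k\partial_k$ the Lie derivative is $(L_\xi A)_i=\xi^k\partial_kA_i+A_k\partial_i\xi^k$. The vector fields used are, by components $(\xi^1,\xi^2,\xi^3,\xi^4)$: $e_1=(1,0,0,0)$, $e_2=(0,1,0,0)$, $e_3=(0,0,1,0)$, $e_4=(0,0,0,1)$, $e_{12}=(-x^2,x^1,0,0)$, $e_{13}=(x^3,0,-x^1,0)$, $e_{23}=(0,-x^3,x^2,0)$,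 $e_{14}=(x^4,0,0,x^1)$, $e_{24}=(0,x^4,0,x^2)$, $e_{34}=(0,0,x^4,x^3)$. A potential admits a family of vector fields if $L_\xi A=0$ for each $\xi$ in it (equivalently for every element of their linear span). ''Functions'' are smooth real functions; $\mathrm{ch}=\cosh$, $\mathrm{sh}=\sinh$. *)

From Stdlib Require Import Reals List.
From Coquelicot Require Import Coquelicot.
Open Scope R_scope.

Definition R4 : Type := (R * R * R * R)%type.
(* Points (y1,y2,y3) of R^3 (used for (x~1, x~3, x~4)). *)
Definition R3 : Type := (R * R * R)%type.

Definition coord4 (x : R4) (i : nat) : R :=
  match x with (x1, x2, x3, x4) =>
    match i with 1%nat => x1 | 2%nat => x2 | 3%nat => x3 | 4%nat => x4 | _ => 0 end
  end.

Definition upd4 (x : R4) (i : nat) (t : R) : R4 :=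
  match x with (x1, x2, x3, x4) =>
    match i with
    | 1%nat => (t, x2, x3, x4) | 2%nat => (x1, t, x3, x4)
    | 3%nat => (x1, x2, t, x4) | 4%nat => (x1, x2, x3, t)
    | _ => x end
  end.

Definition coord3 (y : R3) (i : nat) : R :=
  match y with (y1, y2, y3) =>
    match i with 1%nat => y1 | 2%nat => y2 | 3%nat => y3 | _ => 0 end
  end.

Definition upd3 (y : R3) (i : nat) (t : R) : R3 :=
  match y with (y1, y2, y3) =>
    match i with
    | 1%nat => (t, y2, y3) | 2%nat => (y1, t, y3) | 3%nat => (y1, y2, t)
    | _ => y end
  end.

Definition pd4 (i : nat) (f : R4 -> R) : R4 -> R :=
  fun x => Derive (fun t => f (upd4 x i t)) (coord4 x i).
Definition pd3 (i : nat) (f : R3 -> R) : R3 -> R :=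
  fun y => Derive (fun t => f (upd3 y i t)) (coord3 y i).

Fixpoint dl4 (l : list nat) (f : R4 -> R) : R4 -> R :=
  match l with nil => f | i :: l' => pd4 i (dl4 l' f) end.
Fixpoint dl3 (l : list nat) (f : R3 -> R) : R3 -> R :=
  match l with nil => f | i :: l' => pd3 i (dl3 l' f) end.

Definition smooth4 (U : R4 -> Prop) (f : R4 -> R) : Prop :=
  forall (l : list nat) (x : R4), U x ->
    continuous (dl4 l f) x /\
    forall i : nat, ex_derive (fun t => dl4 l f (upd4 x i t)) (coord4 x i).
Definition smooth3 (V : R3 -> Prop) (f : R3 -> R) : Prop :=
  forall (l : list nat) (y : R3), V y ->
    continuous (dl3 l f) y /\
    forall i : nat, ex_derive (fun t => dl3 l f (upd3 y i t)) (coord3 y i).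

(* Vector fields and covector fields: components indexed by 1..4. *)
Definition vfield := nat -> R4 -> R.
Definition covfield := nat -> R4 -> R.

Definition sum4 (g : nat -> R) : R := g 1%nat + g 2%nat + g 3%nat + g 4%nat.

Definition lie (xi : vfield) (A : covfield) (i : nat) (x : R4) : R :=
  sum4 (fun k => xi k x * pd4 k (A i) x + A k x * pd4 i (xi k) x).

Definition e12 : vfield := fun k x =>
  match k with 1%nat => - coord4 x 2 | 2%nat => coord4 x 1 | _ => 0 end.
Definition e14 : vfield := fun k x =>
  match k with 1%nat => coord4 x 4 | 4%nat => coord4 x 1 | _ => 0 end.

Definition vf_sub (a b : vfield) : vfield := fun k x => a k x - b k x.

Definition Ugood (x : R4) : Prop := coord4 x 2 + coord4 x 4 > 0.
Definition Vgood (y : R3) : Prop := coord3 y 1 > 0.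

Definition tx1 (x : R4) : R := coord4 x 2 + coord4 x 4.
Definition tx2 (x : R4) : R := - coord4 x 1 / (coord4 x 2 + coord4 x 4).
Definition tx3 (x : R4) : R := coord4 x 3.
Definition tx4 (x : R4) : R :=
  / 2 * (coord4 x 1) ^ 2 + coord4 x 2 * (coord4 x 2 + coord4 x 4).

From Stdlib Require Import Reals List Lra Lia.
From Coquelicot Require Import Coquelicot.
Open Scope R_scope.

(* Along the explicit polynomial flow of xi = e12 - e14 the coordinates x~1, x~3, x~4 are
   constant and x~2 increases with unit speed, and the orbit of x meets the slice x^1 = 0 at
   [section (x~1, x~3, x~4)].  By the chain rule, L_xi A = 0 says exactly that
   a_k(u) = A_k(flow u) solves a1' = a4 - a2, a2' = a1, a3' = 0, a4' = a1, whose solutions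
   are the stated polynomials in u = x~2 with coefficients the values of A on the slice;
   conversely those polynomials solve the system.  The coefficients C = A o section are
   smooth because the functions generated by the coordinates, 1/y1 and pullbacks along
   [section] form an algebra closed under partial differentiation.  The chain rule itself
   rests on the first-order expansion of a function with continuous partial derivatives,
   obtained coordinate by coordinate from the mean value theorem. *)

(** * Chain rule in four variables *)

Lemma coord4_upd4_same x k t : (1 <= k <= 4)%nat -> coord4 (upd4 x k t) k = t.
Proof.
  intros Hk; destruct x as [[[x1 x2] x3] x4].
  destruct k as [|[|[|[|[|k]]]]]; simpl; reflexivity || lia.
Qed.

Lemma coord4_upd4_other x k j t : j <> k -> coord4 (upd4 x k t) j = coord4 x j.
Proof.
  intros Hjk; destruct x as [[[x1 x2] x3] x4].
  destruct k as [|[|[|[|[|k]]]]]; destruct j as [|[|[|[|[|j]]]]]; simpl;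
    reflexivity || congruence.
Qed.

Lemma upd4_upd4 x k s t : upd4 (upd4 x k s) k t = upd4 x k t.
Proof. destruct x as [[[x1 x2] x3] x4]; destruct k as [|[|[|[|[|k]]]]]; reflexivity. Qed.

Lemma upd4_coord4 x k : upd4 x k (coord4 x k) = x.
Proof. destruct x as [[[x1 x2] x3] x4]; destruct k as [|[|[|[|[|k]]]]]; reflexivity. Qed.

Lemma upd3_coord3 y k : upd3 y k (coord3 y k) = y.
Proof. destruct y as [[y1 y2] y3]; destruct k as [|[|[|[|k]]]]; reflexivity. Qed.

Definition box4 (p : R4) (d : R) (z : R4) : Prop :=
  forall k, (1 <= k <= 4)%nat -> Rabs (coord4 z k - coord4 p k) < d.

Lemma locally_box4 (p : R4) (P : R4 -> Prop) :
  locally p P -> exists d, d > 0 /\ forall z, box4 p d z -> P z.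
Proof.
  intros [e He]; exists e; split; [apply cond_pos|].
  intros z Hz; apply He.
  destruct p as [[[p1 p2] p3] p4], z as [[[z1 z2] z3] z4].
  repeat split; [apply (Hz 1%nat) | apply (Hz 2%nat) | apply (Hz 3%nat) | apply (Hz 4%nat)]; lia.
Qed.

Lemma filter_forall_coords4 {T : Type} {F : (T -> Prop) -> Prop} {FF : Filter F}
  (P : nat -> T -> Prop) :
  (forall k, (1 <= k <= 4)%nat -> F (P k)) -> F (fun z => forall k, (1 <= k <= 4)%nat -> P k z).
Proof.
  intros H.
  assert (H12 := filter_and (F := F) _ _ (H 1%nat ltac:(lia)) (H 2%nat ltac:(lia))).
  assert (H34 := filter_and (F := F) _ _ (H 3%nat ltac:(lia)) (H 4%nat ltac:(lia))).
  generalize (filter_and (F := F) _ _ H12 H34); apply filter_imp; intros z [[H1 H2] [H3 H4]] k Hk.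
  destruct k as [|[|[|[|[|k]]]]]; assumption || lia.
Qed.

Definition lin4 (f : R4 -> R) (p z : R4) : R :=
  sum4 (fun k => pd4 k f p * (coord4 z k - coord4 p k)).
Definition dist4 (p z : R4) : R := sum4 (fun k => Rabs (coord4 z k - coord4 p k)).

Definition C1_at4 (f : R4 -> R) (p : R4) : Prop :=
  locally p (fun z => forall k, ex_derive (fun t => f (upd4 z k t)) (coord4 z k)) /\
  forall k, (1 <= k <= 4)%nat -> continuous (pd4 k f) p.

Lemma MVT_increment_bound (g : R -> R) a b L eps :
  (forall t, Rabs (t - a) <= Rabs (b - a) -> ex_derive g t /\ Rabs (Derive g t - L) <= eps) ->
  Rabs (g b - g a - L * (b - a)) <= eps * Rabs (b - a).
Proof.
  intros H.
  assert (Hseg : forall t, Rmin a b <= t <= Rmax a b -> Rabs (t - a) <= Rabs (b - a)).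
  { intros t; unfold Rmin, Rmax, Rabs; destruct (Rle_dec a b); repeat destruct Rcase_abs; lra. }
  destruct (MVT_gen g a b (Derive g)) as [c [Hc ->]].
  - intros t Ht; apply Derive_correct, H, Hseg; lra.
  - intros t Ht; apply continuity_pt_filterlim, (ex_derive_continuous (V := R_NormedModule)).
    apply H, Hseg; lra.
  - replace (Derive g c * (b - a) - L * (b - a)) with ((Derive g c - L) * (b - a)) by ring.
    rewrite Rabs_mult; apply Rmult_le_compat_r; [apply Rabs_pos|].
    apply H, Hseg, Hc.
Qed.

Lemma box4_toward p d z k : d > 0 -> box4 p d z -> box4 p d (upd4 z k (coord4 p k)).
Proof.
  intros Hd Hz j Hj; destruct (Nat.eq_dec j k) as [->|Hjk].
  - rewrite coord4_upd4_same by exact Hj; unfold Rminus; rewrite Rplus_opp_r, Rabs_R0; exact Hd.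
  - rewrite coord4_upd4_other by exact Hjk; apply Hz, Hj.
Qed.

Lemma coordinate_increment4 (f : R4 -> R) p d eps w k :
  (forall z, box4 p d z -> forall k, (1 <= k <= 4)%nat ->
     ex_derive (fun t => f (upd4 z k t)) (coord4 z k) /\ Rabs (pd4 k f z - pd4 k f p) <= eps) ->
  (1 <= k <= 4)%nat -> box4 p d w ->
  Rabs (f w - f (upd4 w k (coord4 p k)) - pd4 k f p * (coord4 w k - coord4 p k))
    <= eps * Rabs (coord4 w k - coord4 p k).
Proof.
  intros Hbox Hk Hw.
  replace (f w) with (f (upd4 w k (coord4 w k))) by now rewrite upd4_coord4.
  apply (MVT_increment_bound (fun t => f (upd4 w k t))); intros t Ht.
  assert (Hz : box4 p d (upd4 w k t)).
  { intros j Hj; destruct (Nat.eq_dec j k) as [->|Hjk].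
    - rewrite coord4_upd4_same by exact Hj; specialize (Hw k Hj); lra.
    - rewrite coord4_upd4_other by exact Hjk; apply Hw, Hj. }
  destruct (Hbox _ Hz k Hk) as [Hex Hpd]; unfold pd4 in Hpd.
  rewrite coord4_upd4_same in Hex, Hpd by exact Hk.
  rewrite (Derive_ext _ (fun s => f (upd4 w k s))) in Hpd by (intros; now rewrite upd4_upd4).
  split; [|exact Hpd].
  revert Hex; apply ex_derive_ext; intros; now rewrite upd4_upd4.
Qed.

Lemma C1_differentiable4 (f : R4 -> R) p : C1_at4 f p ->
  forall eps, eps > 0 ->
  exists d, d > 0 /\ forall z, box4 p d z -> Rabs (f z - f p - lin4 f p z) <= eps * dist4 p z.
Proof.
  intros [Hex Hc] eps Heps.
  assert (Hnear : locally p (fun z => forall k, (1 <= k <= 4)%nat ->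
            ex_derive (fun t => f (upd4 z k t)) (coord4 z k) /\ Rabs (pd4 k f z - pd4 k f p) <= eps)).
  { apply filter_forall_coords4; intros k Hk.
    generalize (filter_and (F := locally p) _ _ Hex
                  (proj1 (filterlim_locally _ _) (Hc k Hk) (mkposreal eps Heps))).
    apply filter_imp; intros z [Hz Hball]; split; [apply Hz | apply Rlt_le, Hball]. }
  destruct (locally_box4 _ _ Hnear) as [d [Hd Hbox]].
  exists d; split; [exact Hd|]; intros z Hz.
  pose proof (coordinate_increment4 f p d eps) as Step.
  pose proof (box4_toward p d z 1 Hd Hz) as Hz1.
  pose proof (box4_toward p d _ 2 Hd Hz1) as Hz2.
  pose proof (box4_toward p d _ 3 Hd Hz2) as Hz3.
  pose proof (Step z 1%nat Hbox ltac:(lia) Hz) as S1.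
  pose proof (Step _ 2%nat Hbox ltac:(lia) Hz1) as S2.
  pose proof (Step _ 3%nat Hbox ltac:(lia) Hz2) as S3.
  pose proof (Step _ 4%nat Hbox ltac:(lia) Hz3) as S4.
  destruct p as [[[p1 p2] p3] p4], z as [[[z1 z2] z3] z4].
  unfold lin4, dist4, sum4 in *; simpl in *.
  apply Rabs_le_between in S1, S2, S3, S4; apply Rabs_le_between; lra.
Qed.

Lemma increment_bound_of_derive (g : R -> R) t0 l : is_derive g t0 l ->
  locally t0 (fun t => Rabs (g t - g t0) <= (Rabs l + 1) * Rabs (t - t0)).
Proof.
  intros [_ Hd]; specialize (Hd t0 (fun P H => H) (mkposreal 1 Rlt_0_1)).
  revert Hd; apply filter_imp; intros t Ht; simpl in Ht.
  change (Rabs (g t - g t0 - (t - t0) * l) <= 1 * Rabs (t - t0)) in Ht.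
  replace (g t - g t0) with ((g t - g t0 - (t - t0) * l) + (t - t0) * l) by ring.
  eapply Rle_trans; [apply Rabs_triang|]; rewrite Rabs_mult; lra.
Qed.

Lemma is_derive_0_of_small_increments (phi : R -> R) t0 :
  (forall eps, eps > 0 -> locally t0 (fun t => Rabs (phi t - phi t0) <= eps * Rabs (t - t0))) ->
  is_derive phi t0 0.
Proof.
  intros H; split; [apply is_linear_scal_l|].
  intros x Hx; apply (is_filter_lim_locally_unique (V := R_NormedModule)) in Hx; subst x.
  intros eps; generalize (H eps (cond_pos eps)); apply filter_imp; intros t Ht.
  change (Rabs (phi t - phi t0 - (t - t0) * 0) <= eps * Rabs (t - t0)).
  now rewrite Rmult_0_r, Rminus_0_r.
Qed.

Lemma is_derive_remainder_comp4 (r : R4 -> R) (g : R -> R4) t0 (dg : nat -> R) :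
  (forall eps, eps > 0 ->
     exists d, d > 0 /\ forall z, box4 (g t0) d z -> Rabs (r z) <= eps * dist4 (g t0) z) ->
  (forall k, (1 <= k <= 4)%nat -> is_derive (fun t => coord4 (g t) k) t0 (dg k)) ->
  is_derive (fun t => r (g t)) t0 0.
Proof.
  intros Hr Hg; apply is_derive_0_of_small_increments; intros eps Heps.
  set (K := sum4 (fun k => Rabs (dg k) + 1)).
  assert (HK : forall k, (1 <= k <= 4)%nat -> Rabs (dg k) + 1 <= K).
  { intros k Hk; unfold K, sum4.
    pose proof (Rabs_pos (dg 1%nat)); pose proof (Rabs_pos (dg 2%nat));
    pose proof (Rabs_pos (dg 3%nat)); pose proof (Rabs_pos (dg 4%nat)).
    destruct k as [|[|[|[|[|k]]]]]; lra || lia. }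
  assert (HKpos : K > 0) by (specialize (HK 1%nat ltac:(lia)); pose proof (Rabs_pos (dg 1%nat)); lra).
  destruct (Hr (eps / (4 * K))) as [d [Hd Hbox]]; [apply Rdiv_lt_0_compat; lra|].
  assert (Hr0 : r (g t0) = 0).
  { assert (Hb : box4 (g t0) d (g t0)) by (intros k _; unfold Rminus; rewrite Rplus_opp_r, Rabs_R0; exact Hd).
    specialize (Hbox _ Hb); unfold dist4, sum4 in Hbox; rewrite !Rminus_diag, !Rabs_R0 in Hbox.
    apply Rabs_eq_0; apply Rle_antisym; [lra | apply Rabs_pos]. }
  assert (Hlip : locally t0 (fun t => forall k, (1 <= k <= 4)%nat ->
            Rabs (coord4 (g t) k - coord4 (g t0) k) <= K * Rabs (t - t0))).
  { apply filter_forall_coords4; intros k Hk.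
    generalize (increment_bound_of_derive _ _ _ (Hg k Hk)); apply filter_imp; intros t Ht.
    eapply Rle_trans; [exact Ht|]; apply Rmult_le_compat_r; [apply Rabs_pos | apply HK, Hk]. }
  assert (Hclose : locally t0 (fun t => K * Rabs (t - t0) < d)).
  { assert (Hdk : 0 < d / K) by (apply Rdiv_lt_0_compat; lra).
    exists (mkposreal _ Hdk); intros t Ht; change (Rabs (t - t0) < d / K) in Ht.
    apply (Rmult_lt_compat_l K) in Ht; [|exact HKpos].
    now replace (K * (d / K)) with d in Ht by (field; lra). }
  generalize (filter_and _ _ Hlip Hclose); apply filter_imp; intros t [Ht Htd].
  assert (Hb : box4 (g t0) d (g t)) by (intros k Hk; specialize (Ht k Hk); lra).
  rewrite Hr0, Rminus_0_r.
  eapply Rle_trans; [apply Hbox, Hb|].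
  assert (Hdist : dist4 (g t0) (g t) <= 4 * K * Rabs (t - t0)).
  { unfold dist4, sum4.
    pose proof (Ht 1%nat ltac:(lia)); pose proof (Ht 2%nat ltac:(lia));
    pose proof (Ht 3%nat ltac:(lia)); pose proof (Ht 4%nat ltac:(lia)); lra. }
  apply Rle_trans with (eps / (4 * K) * (4 * K * Rabs (t - t0))).
  - apply Rmult_le_compat_l; [apply Rlt_le, Rdiv_lt_0_compat; lra | exact Hdist].
  - right; field; lra.
Qed.

Lemma is_derive_comp4 (f : R4 -> R) (g : R -> R4) t0 (dg : nat -> R) :
  C1_at4 f (g t0) ->
  (forall k, (1 <= k <= 4)%nat -> is_derive (fun t => coord4 (g t) k) t0 (dg k)) ->
  is_derive (fun t => f (g t)) t0 (sum4 (fun k => pd4 k f (g t0) * dg k)).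
Proof.
  intros Hf Hg; set (p := g t0).
  assert (Hlin : is_derive (fun t => lin4 f p (g t)) t0 (sum4 (fun k => pd4 k f p * dg k))).
  { assert (Hk : forall k, (1 <= k <= 4)%nat ->
      is_derive (fun t => pd4 k f p * (coord4 (g t) k - coord4 p k)) t0 (pd4 k f p * dg k)).
    { intros k Hk; apply is_derive_scal.
      replace (dg k) with (dg k - 0) by ring.
      apply (is_derive_minus (V := R_NormedModule) _ (fun _ => coord4 p k)); [apply Hg, Hk|].
      exact (is_derive_const (V := R_NormedModule) _ t0). }
    unfold lin4, sum4; repeat apply (is_derive_plus (V := R_NormedModule)); apply Hk; lia. }
  assert (Hrem : is_derive (fun t => f (g t) - f p - lin4 f p (g t)) t0 0).
  { apply (is_derive_remainder_comp4 (fun z => f z - f p - lin4 f p z) g t0 dg); [|exact Hg].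
    apply C1_differentiable4, Hf. }
  apply (is_derive_ext (fun t => (f (g t) - f p - lin4 f p (g t)) + (f p + lin4 f p (g t))));
    [intros t; simpl; ring|].
  replace (sum4 (fun k => pd4 k f p * dg k)) with (0 + (0 + sum4 (fun k => pd4 k f p * dg k))) by ring.
  apply (is_derive_plus (V := R_NormedModule)); [exact Hrem|].
  apply (is_derive_plus (V := R_NormedModule) (fun _ => f p)); [|exact Hlin].
  exact (is_derive_const (V := R_NormedModule) _ t0).
Qed.

(** * The flow of xi *)

Lemma Ugood_locally x : Ugood x -> locally x Ugood.
Proof.
  intros Hx; unfold Ugood in *.
  assert (Hd : 0 < (coord4 x 2 + coord4 x 4) / 2) by lra.
  exists (mkposreal _ Hd); destruct x as [[[x1 x2] x3] x4]; intros [[[z1 z2] z3] z4] [[[_ H2] _] H4].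
  change (Rabs (z2 - x2) < (x2 + x4) / 2) in H2; change (Rabs (z4 - x4) < (x2 + x4) / 2) in H4.
  apply Rabs_def2 in H2, H4; simpl in *; lra.
Qed.

Lemma smooth4_C1_at f p : smooth4 Ugood f -> Ugood p -> C1_at4 f p.
Proof.
  intros Hf Hp; split.
  - generalize (Ugood_locally p Hp); apply filter_imp; intros z Hz; apply (Hf nil z Hz).
  - intros k _; apply (Hf (k :: nil) p Hp).
Qed.

Lemma smooth4_pd f k : smooth4 Ugood f -> smooth4 Ugood (pd4 k f).
Proof.
  intros Hf l; replace (dl4 l (pd4 k f)) with (dl4 (l ++ k :: nil) f); [apply Hf|].
  induction l as [|i l IH]; simpl; congruence.
Qed.

Definition xi : vfield := vf_sub e12 e14.

Definition Dxi (u : R4 -> R) (x : R4) : R := sum4 (fun k => pd4 k u x * xi k x).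

Lemma lie_xi (A : covfield) x :
  lie xi A 1 x = Dxi (A 1%nat) x + A 2%nat x - A 4%nat x /\
  lie xi A 2 x = Dxi (A 2%nat) x - A 1%nat x /\
  lie xi A 3 x = Dxi (A 3%nat) x /\
  lie xi A 4 x = Dxi (A 4%nat) x - A 1%nat x.
Proof.
  assert (Hpd : forall i k, pd4 i (xi k) x =
            match i, k with
            | 1%nat, 2%nat => 1 | 1%nat, 4%nat => -1 | 2%nat, 1%nat => -1 | 4%nat, 1%nat => -1
            | _, _ => 0 end).
  { intros i k; destruct x as [[[x1 x2] x3] x4]; unfold pd4, xi, vf_sub, e12, e14.
    destruct i as [|[|[|[|[|i]]]]]; destruct k as [|[|[|[|[|k]]]]]; simpl;
      apply is_derive_unique; auto_derive; trivial; ring. }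
  unfold lie, Dxi, sum4; rewrite !Hpd; repeat split; ring.
Qed.

(* xi = (-(x^2 + x^4), x^1, 0, -x^1); s = x^2 + x^4 is constant along its orbits. *)
Definition flow (x : R4) (u : R) : R4 :=
  let '(x1, x2, x3, x4) := x in
  let s := x2 + x4 in
  (x1 - s * u, x2 + x1 * u - / 2 * s * u ^ 2, x3, x4 - x1 * u + / 2 * s * u ^ 2).

Lemma flow_0 x : flow x 0 = x.
Proof. destruct x as [[[x1 x2] x3] x4]; simpl; repeat f_equal; ring. Qed.

Lemma flow_Ugood x u : Ugood x -> Ugood (flow x u).
Proof. destruct x as [[[x1 x2] x3] x4]; unfold Ugood; simpl; lra. Qed.

Lemma is_derive_along_flow f x u : smooth4 Ugood f -> Ugood x ->
  is_derive (fun v => f (flow x v)) u (Dxi f (flow x u)).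
Proof.
  intros Hf Hx; apply is_derive_comp4; [apply smooth4_C1_at; [exact Hf | apply flow_Ugood, Hx]|].
  intros k Hk; destruct x as [[[x1 x2] x3] x4].
  unfold xi, vf_sub, e12, e14.
  destruct k as [|[|[|[|[|k]]]]]; try lia; simpl; auto_derive; trivial; field.
Qed.

Definition invariants (x : R4) : R3 := (tx1 x, tx3 x, tx4 x).

Lemma invariants_flow x u : invariants (flow x u) = invariants x.
Proof.
  destruct x as [[[x1 x2] x3] x4]; unfold invariants, tx1, tx3, tx4; simpl.
  f_equal; [f_equal|]; field.
Qed.

Lemma tx2_flow x u : Ugood x -> tx2 (flow x u) = tx2 x + u.
Proof. destruct x as [[[x1 x2] x3] x4]; unfold Ugood, tx2; simpl; intros Hx; field; lra. Qed.

(* The point with x^1 = 0 (i.e. x~2 = 0) on the orbit with invariants y. *)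
Definition section (y : R3) : R4 :=
  (0, coord3 y 3 / coord3 y 1, coord3 y 2, coord3 y 1 - coord3 y 3 / coord3 y 1).

Lemma section_Ugood y : Vgood y -> Ugood (section y).
Proof.
  destruct y as [[y1 y2] y3]; unfold Vgood, Ugood; simpl; intros Hy.
  now replace (y3 / y1 + (y1 - y3 / y1)) with y1 by ring.
Qed.

Lemma flow_section_invariants x : Ugood x -> flow (section (invariants x)) (tx2 x) = x.
Proof.
  destruct x as [[[x1 x2] x3] x4]; unfold Ugood, section, invariants, tx1, tx2, tx3, tx4; simpl.
  intros Hx; repeat f_equal; field; lra.
Qed.

Definition potential_form (A : covfield) (C1 C2 C3 B : R3 -> R) (x : R4) : Prop :=
  let y := invariants x in
  A 1%nat x = C2 y * tx2 x + C3 y /\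
  A 2%nat x = / 2 * C2 y * tx2 x ^ 2 + C3 y * tx2 x + C1 y /\
  A 3%nat x = B y /\
  A 4%nat x = A 2%nat x + C2 y.

Lemma Dxi_of_flow_profile (f : R4 -> R) x (a : R -> R) da :
  smooth4 Ugood f -> Ugood x -> (forall u, f (flow x u) = a u) -> is_derive a 0 da ->
  Dxi f x = da.
Proof.
  intros Hf Hx Ha Hda.
  pose proof (is_derive_along_flow f x 0 Hf Hx) as H; rewrite flow_0 in H.
  apply (is_derive_ext _ _ _ _ Ha) in H.
  now rewrite <- (is_derive_unique _ _ _ H), (is_derive_unique _ _ _ Hda).
Qed.

Lemma lie_xi_zero_of_potential_form (A : covfield) C1 C2 C3 B :
  (forall i, (1 <= i <= 4)%nat -> smooth4 Ugood (A i)) ->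
  (forall x, Ugood x -> potential_form A C1 C2 C3 B x) ->
  forall i x, (1 <= i <= 4)%nat -> Ugood x -> lie xi A i x = 0.
Proof.
  intros HS HA i x Hi Hx.
  assert (Hu : forall u, let y := invariants x in let t := tx2 x in
    A 1%nat (flow x u) = C2 y * (t + u) + C3 y /\
    A 2%nat (flow x u) = / 2 * C2 y * (t + u) ^ 2 + C3 y * (t + u) + C1 y /\
    A 3%nat (flow x u) = B y /\
    A 4%nat (flow x u) = / 2 * C2 y * (t + u) ^ 2 + C3 y * (t + u) + C1 y + C2 y).
  { intros u y t; destruct (HA _ (flow_Ugood x u Hx)) as (F1 & F2 & F3 & F4).
    rewrite invariants_flow, tx2_flow in * by exact Hx.
    now rewrite F4, F2. }
  destruct (HA x Hx) as [E1 [_ [_ E4]]].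
  set (y := invariants x) in *; set (t := tx2 x) in *.
  assert (D1 : Dxi (A 1%nat) x = C2 y).
  { apply (Dxi_of_flow_profile _ x (fun u => C2 y * (t + u) + C3 y)); [apply HS; lia | exact Hx | apply Hu|].
    auto_derive; trivial; ring. }
  assert (D2 : Dxi (A 2%nat) x = C2 y * t + C3 y).
  { apply (Dxi_of_flow_profile _ x (fun u => / 2 * C2 y * (t + u) ^ 2 + C3 y * (t + u) + C1 y));
      [apply HS; lia | exact Hx | apply Hu|].
    auto_derive; trivial; field. }
  assert (D3 : Dxi (A 3%nat) x = 0).
  { apply (Dxi_of_flow_profile _ x (fun _ => B y)); [apply HS; lia | exact Hx | apply Hu|].
    auto_derive; trivial. }
  assert (D4 : Dxi (A 4%nat) x = C2 y * t + C3 y).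
  { apply (Dxi_of_flow_profile _ x (fun u => / 2 * C2 y * (t + u) ^ 2 + C3 y * (t + u) + C1 y + C2 y));
      [apply HS; lia | exact Hx | apply Hu|].
    auto_derive; trivial; field. }
  destruct (lie_xi A x) as [L1 [L2 [L3 L4]]].
  destruct i as [|[|[|[|[|i]]]]]; try lia.
  - rewrite L1, D1, E4; ring.
  - rewrite L2, D2, E1; ring.
  - rewrite L3, D3; ring.
  - rewrite L4, D4, E1; ring.
Qed.

Lemma const_of_zero_derive (w dw : R -> R) :
  (forall u, is_derive w u (dw u)) -> (forall u, dw u = 0) -> forall u v, w u = w v.
Proof.
  intros H H0 u v; destruct (MVT_gen w v u dw) as [c [_ Hc]].
  - intros t _; apply H.
  - intros t _; apply continuity_pt_filterlim, (ex_derive_continuous (V := R_NormedModule)).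
    eexists; apply H.
  - apply Rminus_diag_uniq; rewrite Hc, H0; ring.
Qed.

Lemma flow_ode_solution (a1 a2 a3 a4 : R -> R) :
  (forall u, is_derive a1 u (a4 u - a2 u)) -> (forall u, is_derive a2 u (a1 u)) ->
  (forall u, is_derive a3 u 0) -> (forall u, is_derive a4 u (a1 u)) ->
  forall u, let c := a4 0 - a2 0 in
  a1 u = c * u + a1 0 /\ a2 u = / 2 * c * u ^ 2 + a1 0 * u + a2 0 /\
  a3 u = a3 0 /\ a4 u = a2 u + c.
Proof.
  intros H1 H2 H3 H4 u c.
  assert (W4 : forall v, a4 v - a2 v = c).
  { intros v; refine (const_of_zero_derive (fun v => a4 v - a2 v) (fun w => a1 w - a1 w) _ _ v 0);
      [|intros; ring].
    intros w; apply (is_derive_minus (V := R_NormedModule)); [apply H4 | apply H2]. }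
  assert (W1 : forall v, a1 v = c * v + a1 0).
  { intros v; enough (a1 v - c * v = a1 0 - c * 0) by lra.
    refine (const_of_zero_derive (fun v => a1 v - c * v) (fun w => a4 w - a2 w - c) _ _ v 0);
      [|intros; rewrite W4; ring].
    intros w; apply (is_derive_minus (V := R_NormedModule)); [apply H1 | auto_derive; trivial; ring]. }
  assert (W2 : a2 u - (/ 2 * c * u ^ 2 + a1 0 * u) = a2 0 - (/ 2 * c * 0 ^ 2 + a1 0 * 0)).
  { refine (const_of_zero_derive (fun v => a2 v - (/ 2 * c * v ^ 2 + a1 0 * v))
                                (fun w => a1 w - (c * w + a1 0)) _ _ u 0); [|intros; rewrite W1; ring].
    intros w; apply (is_derive_minus (V := R_NormedModule)); [apply H2 | auto_derive; trivial; field]. }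
  repeat split.
  - apply W1.
  - lra.
  - apply (const_of_zero_derive a3 (fun _ => 0) H3); trivial.
  - specialize (W4 u); lra.
Qed.

Lemma flow_ode_of_lie_xi_zero (A : covfield) p :
  (forall i, (1 <= i <= 4)%nat -> smooth4 Ugood (A i)) ->
  (forall i x, (1 <= i <= 4)%nat -> Ugood x -> lie xi A i x = 0) ->
  Ugood p ->
  (forall u, is_derive (fun v => A 1%nat (flow p v)) u (A 4%nat (flow p u) - A 2%nat (flow p u))) /\
  (forall u, is_derive (fun v => A 2%nat (flow p v)) u (A 1%nat (flow p u))) /\
  (forall u, is_derive (fun v => A 3%nat (flow p v)) u 0) /\
  (forall u, is_derive (fun v => A 4%nat (flow p v)) u (A 1%nat (flow p u))).
Proof.
  intros HS HL Hp.
  assert (HD : forall k u l, (1 <= k <= 4)%nat -> Dxi (A k) (flow p u) = l ->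
            is_derive (fun v => A k (flow p v)) u l).
  { intros k u l Hk <-; apply is_derive_along_flow; [apply HS, Hk | exact Hp]. }
  assert (HLu : forall i u, (1 <= i <= 4)%nat -> lie xi A i (flow p u) = 0)
    by (intros i u Hi; apply HL; [exact Hi | apply flow_Ugood, Hp]).
  split; [|split; [|split]]; intros u; destruct (lie_xi A (flow p u)) as (L1 & L2 & L3 & L4).
  - apply HD; [lia|]; specialize (HLu 1%nat u ltac:(lia)); lra.
  - apply HD; [lia|]; specialize (HLu 2%nat u ltac:(lia)); lra.
  - apply HD; [lia|]; specialize (HLu 3%nat u ltac:(lia)); lra.
  - apply HD; [lia|]; specialize (HLu 4%nat u ltac:(lia)); lra.
Qed.

Lemma potential_form_of_lie_xi_zero (A : covfield) :
  (forall i, (1 <= i <= 4)%nat -> smooth4 Ugood (A i)) ->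
  (forall i x, (1 <= i <= 4)%nat -> Ugood x -> lie xi A i x = 0) ->
  forall x, Ugood x ->
  potential_form A (fun y => A 2%nat (section y)) (fun y => A 4%nat (section y) - A 2%nat (section y))
                   (fun y => A 1%nat (section y)) (fun y => A 3%nat (section y)) x.
Proof.
  intros HS HL x Hx.
  assert (Hp : Ugood (section (invariants x))) by (apply section_Ugood, Hx).
  destruct (flow_ode_of_lie_xi_zero A _ HS HL Hp) as (D1 & D2 & D3 & D4).
  destruct (flow_ode_solution _ _ _ _ D1 D2 D3 D4 (tx2 x)) as (E1 & E2 & E3 & E4).
  rewrite flow_section_invariants, flow_0 in * by exact Hx.
  repeat split; assumption.
Qed.

(** * Smoothness of the coefficients *)

Lemma Vgood_locally y : Vgood y -> locally y Vgood.
Proof.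
  intros Hy; unfold Vgood in *.
  assert (Hd : 0 < coord3 y 1 / 2) by lra.
  exists (mkposreal _ Hd); destruct y as [[y1 y2] y3]; intros [[z1 z2] z3] [[H1 _] _].
  change (Rabs (z1 - y1) < y1 / 2) in H1; apply Rabs_def2 in H1; simpl in *; lra.
Qed.

Lemma Vgood_line y k : Vgood y -> locally (coord3 y k) (fun t => Vgood (upd3 y k t)).
Proof.
  intros Hy; unfold Vgood in *.
  assert (Hd : 0 < coord3 y 1 / 2) by lra.
  exists (mkposreal _ Hd); destruct y as [[y1 y2] y3]; intros t Ht.
  change (Rabs (t - coord3 (y1, y2, y3) k) < coord3 (y1, y2, y3) 1 / 2) in Ht.
  destruct k as [|[|[|[|k]]]]; simpl in *; try lra; apply Rabs_def2 in Ht; lra.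
Qed.

Lemma pd3_ext_Vgood (u v : R3 -> R) y k : (forall z, Vgood z -> u z = v z) -> Vgood y ->
  pd3 k u y = pd3 k v y.
Proof.
  intros Huv Hy; apply Derive_ext_loc.
  generalize (Vgood_line y k Hy); apply filter_imp; intros t Ht; apply Huv, Ht.
Qed.

Lemma ex_derive_ext_Vgood (u v : R3 -> R) y k : (forall z, Vgood z -> u z = v z) -> Vgood y ->
  ex_derive (fun t => u (upd3 y k t)) (coord3 y k) -> ex_derive (fun t => v (upd3 y k t)) (coord3 y k).
Proof.
  intros Huv Hy; apply ex_derive_ext_loc.
  generalize (Vgood_line y k Hy); apply filter_imp; intros t Ht; apply Huv, Ht.
Qed.

Lemma smooth3_of_closed_family (F : (R3 -> R) -> Prop) :
  (forall g y, F g -> Vgood y -> continuous g y) ->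
  (forall g i, F g -> exists g', F g' /\
     forall y, Vgood y -> is_derive (fun t => g (upd3 y i t)) (coord3 y i) (g' y)) ->
  forall g, F g -> smooth3 Vgood g.
Proof.
  intros Hcont Hpd g Hg.
  assert (Hdl : forall l, exists g1, F g1 /\ forall y, Vgood y -> dl3 l g y = g1 y).
  { induction l as [|i l [g1 [Hg1 E1]]]; [exists g; split; auto|].
    destruct (Hpd g1 i Hg1) as [g2 [Hg2 E2]]; exists g2; split; [exact Hg2|].
    intros y Hy; simpl; rewrite (pd3_ext_Vgood _ g1 y i E1 Hy).
    apply is_derive_unique, E2, Hy. }
  intros l y Hy; destruct (Hdl l) as [g1 [Hg1 E1]]; split.
  - apply (continuous_ext_loc _ g1); [|apply Hcont; assumption].
    generalize (Vgood_locally y Hy); apply filter_imp; intros z Hz; symmetry; apply E1, Hz.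
  - intros i; apply (ex_derive_ext_Vgood g1); [intros z Hz; symmetry; apply E1, Hz | exact Hy|].
    destruct (Hpd g1 i Hg1) as [g2 [_ E2]]; eexists; apply E2, Hy.
Qed.

Lemma continuous_pair {U V W : UniformSpace} (a : U -> V) (b : U -> W) y :
  continuous a y -> continuous b y -> continuous (fun z => (a z, b z)) y.
Proof.
  intros Ha Hb; apply (continuous_comp_2 a b pair y Ha Hb).
  apply (continuous_ext (fun z => z)); [intros [u v]; reflexivity | apply continuous_id].
Qed.

Lemma continuous_coord3 j y : continuous (fun z => coord3 z j) y.
Proof.
  destruct j as [|[|[|[|j]]]].
  - apply (continuous_ext (fun _ => 0)); [intros [[a b] c]; reflexivity | apply continuous_const].
  - apply (continuous_ext (fun z : R3 => fst (fst z))); [intros [[a b] c]; reflexivity|].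
    apply (continuous_comp fst fst); apply continuous_fst.
  - apply (continuous_ext (fun z : R3 => snd (fst z))); [intros [[a b] c]; reflexivity|].
    apply (continuous_comp fst snd); [apply continuous_fst | apply continuous_snd].
  - apply (continuous_ext (fun z : R3 => snd z)); [intros [[a b] c]; reflexivity | apply continuous_snd].
  - apply (continuous_ext (fun _ => 0)); [intros [[a b] c]; reflexivity | apply continuous_const].
Qed.

Lemma continuous_inv_y1 y : Vgood y -> continuous (fun z => / coord3 z 1) y.
Proof.
  intros Hy; apply (continuous_comp (fun z => coord3 z 1) Rinv); [apply continuous_coord3|].
  apply continuous_Rinv; unfold Vgood in Hy; lra.
Qed.

Lemma continuous_section y : Vgood y -> continuous section y.
Proof.
  intros Hy.
  assert (Hq : continuous (fun z => coord3 z 3 / coord3 z 1) y).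
  { apply (continuous_mult (fun z => coord3 z 3)); [apply continuous_coord3 | apply continuous_inv_y1, Hy]. }
  repeat apply continuous_pair; [apply continuous_const | exact Hq | apply continuous_coord3|].
  apply (continuous_minus (fun z => coord3 z 1)); [apply continuous_coord3 | exact Hq].
Qed.

Definition section_jac (i k : nat) (y : R3) : R :=
  match i, k with
  | 1%nat, 2%nat => - (coord3 y 3 * (/ coord3 y 1 * / coord3 y 1))
  | 1%nat, 4%nat => 1 + coord3 y 3 * (/ coord3 y 1 * / coord3 y 1)
  | 2%nat, 3%nat => 1
  | 3%nat, 2%nat => / coord3 y 1
  | 3%nat, 4%nat => - / coord3 y 1
  | _, _ => 0
  end.

Lemma is_derive_section_coord y i k : Vgood y -> (1 <= k <= 4)%nat ->
  is_derive (fun t => coord4 (section (upd3 y i t)) k) (coord3 y i) (section_jac i k y).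
Proof.
  destruct y as [[y1 y2] y3]; unfold Vgood; simpl; intros Hy Hk.
  destruct i as [|[|[|[|i]]]]; destruct k as [|[|[|[|[|k]]]]]; try lia;
    simpl; auto_derive; try lra; field; lra.
Qed.

Lemma is_derive_pullback f y i : smooth4 Ugood f -> Vgood y ->
  is_derive (fun t => f (section (upd3 y i t))) (coord3 y i)
            (sum4 (fun k => pd4 k f (section y) * section_jac i k y)).
Proof.
  intros Hf Hy.
  pose proof (is_derive_comp4 f (fun t => section (upd3 y i t)) (coord3 y i) (fun k => section_jac i k y)) as H.
  cbv beta in H; rewrite upd3_coord3 in H; apply H.
  - apply smooth4_C1_at; [exact Hf | apply section_Ugood, Hy].
  - intros k Hk; apply is_derive_section_coord; assumption.
Qed.

(* The coordinates and 1/y1 are there to generate the entries of [section_jac], so that the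
   algebra is closed under partial derivatives on V. *)
Inductive pullback_alg : (R3 -> R) -> Prop :=
  | pullback_alg_pullback f : smooth4 Ugood f -> pullback_alg (fun y => f (section y))
  | pullback_alg_const c : pullback_alg (fun _ => c)
  | pullback_alg_coord j : pullback_alg (fun y => coord3 y j)
  | pullback_alg_inv : pullback_alg (fun y => / coord3 y 1)
  | pullback_alg_opp g : pullback_alg g -> pullback_alg (fun y => - g y)
  | pullback_alg_plus g h : pullback_alg g -> pullback_alg h -> pullback_alg (fun y => g y + h y)
  | pullback_alg_mult g h : pullback_alg g -> pullback_alg h -> pullback_alg (fun y => g y * h y).

Ltac pullback_alg_auto :=
  repeat first
    [ apply pullback_alg_plus | apply pullback_alg_mult | apply pullback_alg_opp
    | apply pullback_alg_inv | apply pullback_alg_coord | apply pullback_alg_const ].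

Lemma pullback_alg_section_jac i k : pullback_alg (section_jac i k).
Proof.
  destruct i as [|[|[|[|i]]]]; destruct k as [|[|[|[|[|k]]]]]; unfold section_jac; pullback_alg_auto.
Qed.

Lemma pullback_alg_continuous g y : pullback_alg g -> Vgood y -> continuous g y.
Proof.
  intros Hg Hy; induction Hg.
  - apply (continuous_comp section f); [apply continuous_section, Hy|].
    apply (H nil), section_Ugood, Hy.
  - apply continuous_const.
  - apply continuous_coord3.
  - apply continuous_inv_y1, Hy.
  - apply (continuous_opp g), IHHg.
  - apply (continuous_plus g h); assumption.
  - apply (continuous_mult g h); assumption.
Qed.

Lemma pullback_alg_partial g i : pullback_alg g -> exists g', pullback_alg g' /\
  forall y, Vgood y -> is_derive (fun t => g (upd3 y i t)) (coord3 y i) (g' y).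
Proof.
  induction 1 as [f Hf| c | j | | g _ [g' [Hg' Dg]] | g h _ [g' [Hg' Dg]] _ [h' [Hh' Dh]]
                 | g h Hg [g' [Hg' Dg]] Hh [h' [Hh' Dh]]].
  - exists (fun y => sum4 (fun k => pd4 k f (section y) * section_jac i k y)); split.
    + unfold sum4; repeat apply pullback_alg_plus;
        apply pullback_alg_mult; try apply pullback_alg_section_jac;
        apply pullback_alg_pullback, smooth4_pd, Hf.
    + intros y Hy; apply is_derive_pullback; assumption.
  - exists (fun _ => 0); split; [apply pullback_alg_const|].
    intros y _; apply (is_derive_const (V := R_NormedModule)).
  - destruct i as [|[|[|[|i]]]]; destruct j as [|[|[|[|j]]]];
      (eexists; split; [apply pullback_alg_const|]);
      intros [[y1 y2] y3] _; simpl; auto_derive; trivial; reflexivity.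
  - destruct i as [|[|[|[|i]]]];
      [ exists (fun _ => 0) | exists (fun y => - (/ coord3 y 1 * / coord3 y 1)) | exists (fun _ => 0) .. ];
      (split; [pullback_alg_auto|]);
      intros [[y1 y2] y3] Hy; unfold Vgood in Hy; simpl in *; auto_derive; try lra; field; lra.
  - exists (fun y => - g' y); split; [apply pullback_alg_opp, Hg'|].
    intros y Hy; apply (is_derive_opp (V := R_NormedModule)), Dg, Hy.
  - exists (fun y => g' y + h' y); split; [apply pullback_alg_plus; assumption|].
    intros y Hy; apply (is_derive_plus (V := R_NormedModule)); [apply Dg | apply Dh]; exact Hy.
  - exists (fun y => g' y * h y + g y * h' y); split; [pullback_alg_auto; assumption|].
    intros y Hy; pose proof (is_derive_mult _ _ _ _ _ (Dg y Hy) (Dh y Hy) Rmult_comm) as H.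
    cbv beta in H; rewrite upd3_coord3 in H; exact H.
Qed.

Lemma smooth3_pullback_alg g : pullback_alg g -> smooth3 Vgood g.
Proof.
  apply smooth3_of_closed_family; [intros; apply pullback_alg_continuous; assumption|].
  intros h i Hh; apply pullback_alg_partial, Hh.
Qed.

Theorem mainTheorem3 (A : covfield) :
  (forall i : nat, (1 <= i <= 4)%nat -> smooth4 Ugood (A i)) ->
  ((forall (i : nat) (x : R4), (1 <= i <= 4)%nat -> Ugood x ->
      lie (vf_sub e12 e14) A i x = 0)
   <->
   exists C1 C2 C3 B : R3 -> R,
     smooth3 Vgood C1 /\ smooth3 Vgood C2 /\ smooth3 Vgood C3 /\ smooth3 Vgood B /\
     forall x : R4, Ugood x ->
       let y := (tx1 x, tx3 x, tx4 x) in
       A 1%nat x = C2 y * tx2 x + C3 y /\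
       A 2%nat x = / 2 * C2 y * (tx2 x) ^ 2 + C3 y * tx2 x + C1 y /\
       A 3%nat x = B y /\
       A 4%nat x = A 2%nat x + C2 y).
Proof.
  intros HS; split.
  - intros HL.
    assert (Hpb : forall k, (1 <= k <= 4)%nat -> pullback_alg (fun y => A k (section y)))
      by (intros k Hk; apply pullback_alg_pullback, HS, Hk).
    exists (fun y => A 2%nat (section y)), (fun y => A 4%nat (section y) - A 2%nat (section y)),
           (fun y => A 1%nat (section y)), (fun y => A 3%nat (section y)).
    split; [|split; [|split; [|split]]];
      try (apply smooth3_pullback_alg; pullback_alg_auto; apply Hpb; lia).
    exact (potential_form_of_lie_xi_zero A HS HL).
  - intros (C1 & C2 & C3 & B & _ & _ & _ & _ & HA).
    exact (lie_xi_zero_of_potential_form A C1 C2 C3 B HS HA).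
Qed.
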